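(* Let $\mu,\nu>0$; for integers $N>\max(\mu,\nu)$ let $v=\mu/N$, $w=\nu/N$, $S=\{0,\dots,N\}$ and \[ P_{ij}=(1-v)^{N-i}(1-w)^i\sum_{\substack{\ell,m\ge0:\ \ell-m=j-i}}\binom{N-i}{\ell}\binom{i}{m}\Big(\frac v{1-v}\Big)^\ell\Big(\frac w{1-w}\Big)^m. \] Let $g(z)=(\sqrt{\mu(1-z)}-\sqrt{\nu z})^2$ for $z\in[0,1]$. Then for all $i\in S$, \[ \sum_{j\in S}\sqrt{P_{ij}P_{ji}}\le e^{-g(i/N)}+\mathcal{O}(1/\sqrt N), \] where the $\mathcal{O}(1/\sqrt N)$ term depends on $\mu$ and $\nu$ but not on $i$ (i.e. there is $C=C(\mu,\nu)$ with the bound $e^{-g(i/N)}+C/\sqrt N$ for all such $N$ and all $i\in S$).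
   Context: $P_{ij}$ is the probability that a sequence in $\{0,1\}^N$ with $i$ ones, mutated independently at each site ($0\to1$ with probability $v$, $1\to0$ with probability $w$), ends up with $j$ ones. *)

From Stdlib Require Import Reals Lra.
Open Scope R_scope.

(* The mutation transition probability P_{ij} for N sites, with
   0->1 rate v and 1->0 rate w:
   P_ij = (1-v)^(N-i) (1-w)^i
          * sum_{l,m >= 0, l - m = j - i} C(N-i,l) C(i,m) (v/(1-v))^l (w/(1-w))^m.
   Binomials vanish for l > N-i or m > i, so the sum is over
   l in 0..N-i, m in 0..i with l - m = j - i (as integers). *)
Definition Pmut (N : nat) (v w : R) (i j : nat) : R :=
  (1 - v) ^ (N - i) * (1 - w) ^ i *
  sum_f_R0 (fun l =>
    sum_f_R0 (fun m =>
      if Z.eqb (Z.of_nat l - Z.of_nat m) (Z.of_nat j - Z.of_nat i)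
      then Binomial.C (N - i) l * Binomial.C i m
           * (v / (1 - v)) ^ l * (w / (1 - w)) ^ m
      else 0) i) (N - i).

Definition gfun (mu nu z : R) : R :=
  (sqrt (mu * (1 - z)) - sqrt (nu * z)) ^ 2.

(* For any r > 0, AM-GM gives sqrt (P_ij P_ji) <= (r^(j-i) P_ij + r^(i-j) P_ji) / 2.
   Summed over j, the first half is the generating function of the number of ones
   after mutation, (1 - v + v r)^(N-i) (1 - w + w/r)^i; the second half, indexed by
   the numbers l, m of 0->1 and 1->0 flips, is dominated by a product of two negative
   binomial series.  With a = sqrt (mu (1 - i/N)), b = sqrt (nu i/N) and s = 1/sqrt N,
   the tilt r = (b + s)/(a + s) makes both halves exp (-(a - b)^2 + O(s)) once s is
   small, because a^2 (r - 1) + b^2 (1/r - 1) <= -(a - b)^2 + s (a + b).  For the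
   finitely many remaining N the trivial bound N + 1 is O(1/sqrt N). *)

From Stdlib Require Import Reals Lra Lia ZArith.
Open Scope R_scope.

Lemma sum_f_R0_le_extend (f : nat -> R) (n m : nat) :
  (n <= m)%nat -> (forall k, 0 <= f k) -> sum_f_R0 f n <= sum_f_R0 f m.
Proof.
  intros Hnm Hf; induction Hnm as [|m _ IH]; [lra|].
  simpl; specialize (Hf (S m)); lra.
Qed.

Lemma sum_f_R0_term_le (f : nat -> R) (n k : nat) :
  (k <= n)%nat -> (forall j, 0 <= f j) -> f k <= sum_f_R0 f n.
Proof.
  intros Hk Hf; apply Rle_trans with (sum_f_R0 f k).
  - destruct k; simpl; [lra|]. pose proof (cond_pos_sum f k Hf); lra.
  - now apply sum_f_R0_le_extend.
Qed.

Lemma sum_f_R0_swap (f : nat -> nat -> R) (n m : nat) :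
  sum_f_R0 (fun a => sum_f_R0 (fun b => f a b) m) n =
  sum_f_R0 (fun b => sum_f_R0 (fun a => f a b) n) m.
Proof.
  induction n as [|n IH]; simpl; [reflexivity|].
  now rewrite IH, <- plus_sum.
Qed.

Lemma sum_f_R0_mult_sums (f g : nat -> R) (n m : nat) :
  sum_f_R0 (fun a => sum_f_R0 (fun b => f a * g b) m) n = sum_f_R0 f n * sum_f_R0 g m.
Proof.
  rewrite Rmult_comm, scal_sum; apply sum_eq; intros a _.
  rewrite scal_sum; apply sum_eq; intros; ring.
Qed.

Lemma sum_f_R0_scal_l (c : R) (f : nat -> R) (n : nat) :
  sum_f_R0 (fun k => c * f k) n = c * sum_f_R0 f n.
Proof. rewrite scal_sum; apply sum_eq; intros; ring. Qed.

Lemma sum_f_R0_indicator_le (b : nat -> bool) (c : R) (n : nat) :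
  0 <= c -> (forall j1 j2, b j1 = true -> b j2 = true -> j1 = j2) ->
  sum_f_R0 (fun j => if b j then c else 0) n <= c.
Proof.
  intros Hc Hb.
  enough (Hcases : sum_f_R0 (fun j => if b j then c else 0) n = 0 \/
                   exists k, (k <= n)%nat /\ b k = true /\
                     sum_f_R0 (fun j => if b j then c else 0) n = c)
    by (destruct Hcases as [-> | (k & _ & _ & ->)]; lra).
  induction n as [|n [IH | (k & Hk & Ek & IH)]]; simpl.
  - destruct (b 0%nat) eqn:E; [right; exists 0%nat; auto | left; reflexivity].
  - rewrite IH; destruct (b (S n)) eqn:E.
    + right; exists (S n); split; [lia | split; [exact E | ring]].
    + left; ring.
  - right; exists k; split; [lia | split; [exact Ek|]].
    destruct (b (S n)) eqn:E; [specialize (Hb _ _ Ek E); lia | rewrite IH; ring].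
Qed.

Lemma triple_sum_collapse_le (b : nat -> nat -> nat -> bool) (F : nat -> nat -> nat -> R)
    (H : nat -> nat -> R) (L M : nat -> nat) (n L0 M0 : nat) :
  (forall l m, 0 <= H l m) ->
  (forall l m j1 j2, b j1 l m = true -> b j2 l m = true -> j1 = j2) ->
  (forall j, (j <= n)%nat -> (L j <= L0)%nat /\ (M j <= M0)%nat) ->
  (forall j l m, (j <= n)%nat -> (l <= L j)%nat -> (m <= M j)%nat ->
     F j l m <= if b j l m then H l m else 0) ->
  sum_f_R0 (fun j => sum_f_R0 (fun l => sum_f_R0 (fun m => F j l m) (M j)) (L j)) n <=
  sum_f_R0 (fun l => sum_f_R0 (fun m => H l m) M0) L0.
Proof.
  intros HH Hb HLM HF.
  assert (Hind : forall j l m, 0 <= if b j l m then H l m else 0)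
    by (intros; destruct (b j l m); [apply HH | lra]).
  apply Rle_trans with (sum_f_R0 (fun j => sum_f_R0 (fun l => sum_f_R0 (fun m =>
     if b j l m then H l m else 0) M0) L0) n).
  - apply sum_Rle; intros j Hj; destruct (HLM j Hj) as [HL HM].
    apply Rle_trans with (sum_f_R0 (fun l => sum_f_R0 (fun m =>
       if b j l m then H l m else 0) M0) (L j)).
    + apply sum_Rle; intros l Hl.
      apply Rle_trans with (sum_f_R0 (fun m => if b j l m then H l m else 0) (M j)).
      * apply sum_Rle; intros m Hm; now apply HF.
      * now apply sum_f_R0_le_extend.
    + apply sum_f_R0_le_extend; [exact HL|]. intros l; now apply cond_pos_sum.
  - rewrite sum_f_R0_swap; apply sum_Rle; intros l _.
    rewrite sum_f_R0_swap; apply sum_Rle; intros m _.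
    apply sum_f_R0_indicator_le; [apply HH|]. intros j1 j2; apply Hb.
Qed.

Lemma C_nonneg (n k : nat) : 0 <= C n k.
Proof.
  unfold C; apply Rlt_le, Rdiv_lt_0_compat;
    [| apply Rmult_lt_0_compat]; apply INR_fact_lt_0.
Qed.

Lemma C_n_0 (n : nat) : C n 0 = 1.
Proof. unfold C; rewrite Nat.sub_0_r; simpl; field; apply INR_fact_neq_0. Qed.

Lemma C_n_n (n : nat) : C n n = 1.
Proof. unfold C; rewrite Nat.sub_diag; simpl; field; apply INR_fact_neq_0. Qed.

(* [k <= n] is needed: Stdlib's [C n k] is [n! / k!], not 0, when [k > n]. *)
Lemma C_le_add (n d k : nat) : (k <= n)%nat -> C n k <= C (n + d) k.
Proof.
  intros Hk; induction d as [|d IH]; [rewrite Nat.add_0_r; lra|].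
  replace (n + S d)%nat with (S (n + d)) by lia.
  destruct k as [|k]; [rewrite !C_n_0; lra|].
  rewrite <- pascal by lia; pose proof (C_nonneg (n + d) k); lra.
Qed.

Lemma sum_C_pow (x : R) (n : nat) :
  sum_f_R0 (fun l => C n l * x ^ l) n = (1 + x) ^ n.
Proof. rewrite Rplus_comm, binomial; apply sum_eq; intros; rewrite pow1; ring. Qed.

Definition negbin_sum (p : R) (n L : nat) : R :=
  sum_f_R0 (fun l => C (n + l) l * p ^ l) L.

Lemma negbin_sum_nonneg (p : R) (n L : nat) : 0 <= p -> 0 <= negbin_sum p n L.
Proof.
  intros Hp; apply cond_pos_sum; intros l.
  apply Rmult_le_pos; [apply C_nonneg | now apply pow_le].
Qed.

Lemma negbin_sum_succ (p : R) (n L : nat) :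
  negbin_sum p (S n) (S L) = negbin_sum p n (S L) + p * negbin_sum p (S n) L.
Proof.
  unfold negbin_sum; rewrite !(decomp_sum _ (S L)) by lia; simpl pred.
  rewrite !Nat.add_0_r, !C_n_0, Rplus_assoc; f_equal.
  rewrite <- sum_f_R0_scal_l, <- plus_sum; apply sum_eq; intros l _.
  replace (S n + S l)%nat with (S (S n + l)) by lia.
  replace (n + S l)%nat with (S n + l)%nat by lia.
  rewrite <- pascal by lia; simpl pow; ring.
Qed.

Lemma negbin_sum_le (p : R) (n L : nat) :
  0 <= p < 1 -> negbin_sum p n L <= / (1 - p) ^ S n.
Proof.
  intros Hp; induction n as [|n IH].
  - unfold negbin_sum; simpl.
    rewrite (sum_eq _ (fun l => p ^ l)) by (intros; rewrite C_n_n; ring).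
    rewrite tech3 by lra; rewrite Rmult_1_r.
    pose proof (pow_le p (S L) (proj1 Hp)).
    apply Rle_trans with (1 * / (1 - p)); [|lra].
    apply Rmult_le_compat_r; [apply Rlt_le, Rinv_0_lt_compat|]; lra.
  - assert (Hshift : negbin_sum p (S n) L <= negbin_sum p n L + p * negbin_sum p (S n) L).
    { pose proof (negbin_sum_nonneg p (S n) L (proj1 Hp)).
      destruct L as [|L].
      - unfold negbin_sum; simpl; rewrite !C_n_0; nra.
      - rewrite negbin_sum_succ at 1.
        assert (negbin_sum p (S n) L <= negbin_sum p (S n) (S L)).
        { apply sum_f_R0_le_extend; [lia|]; intros l.
          apply Rmult_le_pos; [apply C_nonneg | apply pow_le; lra]. }
        nra. }
    assert (Hpow : 0 < (1 - p) ^ S n) by (apply pow_lt; lra).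
    replace (/ (1 - p) ^ S (S n)) with (/ (1 - p) ^ S n / (1 - p))
      by (simpl; field; split; [apply pow_nonzero|]; lra).
    apply Rmult_le_reg_r with (1 - p); [lra|].
    unfold Rdiv; rewrite Rmult_assoc, Rinv_l by lra; lra.
Qed.

Lemma Rdiv_le_0_compat (a b : R) : 0 <= a -> 0 < b -> 0 <= a / b.
Proof. intros; apply Rmult_le_pos; [lra | now apply Rlt_le, Rinv_0_lt_compat]. Qed.

Lemma exp_le_mono (x y : R) : x <= y -> exp x <= exp y.
Proof. intros [Hlt | ->]; [now apply Rlt_le, exp_increasing | lra]. Qed.

Lemma exp_pow (x : R) (n : nat) : exp x ^ n = exp (INR n * x).
Proof.
  induction n as [|n IH]; [simpl; now rewrite Rmult_0_l, exp_0|].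
  rewrite S_INR; simpl; rewrite IH, <- exp_plus; f_equal; ring.
Qed.

Lemma pow_le_exp (x : R) (n : nat) : -1 <= x -> (1 + x) ^ n <= exp (INR n * x).
Proof.
  intros Hx; rewrite <- exp_pow; apply pow_incr.
  split; [lra | apply exp_ineq1_le].
Qed.

Lemma inv_pow_le_exp (p : R) (n : nat) :
  0 <= p < 1 -> / (1 - p) ^ n <= exp (INR n * (p / (1 - p))).
Proof.
  intros Hp; rewrite <- pow_inv.
  replace (/ (1 - p)) with (1 + p / (1 - p)) by (field; lra).
  apply pow_le_exp; assert (0 <= p / (1 - p)) by (apply Rdiv_le_0_compat; lra); lra.
Qed.

Lemma inv_one_minus_le (x : R) : 0 <= x <= 1/2 -> / (1 - x) <= 1 + 2 * x.
Proof.
  intros Hx; apply Rmult_le_reg_r with (1 - x); [lra|].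
  rewrite Rinv_l by lra; nra.
Qed.

Lemma exp_le_one_plus_twice (x : R) : 0 <= x <= 1/2 -> exp x <= 1 + 2 * x.
Proof.
  intros Hx; apply Rle_trans with (/ (1 - x)); [|now apply inv_one_minus_le].
  pose proof (exp_ineq1_le (- x)) as Hneg.
  rewrite <- (Rinv_inv (exp x)), <- exp_Ropp.
  apply Rinv_le_contravar; lra.
Qed.

Lemma exp_perturb_le (E g e : R) :
  0 <= g -> 0 <= e <= 1/2 -> E <= - g + e -> exp E <= exp (- g) + 2 * e.
Proof.
  intros Hg He HE.
  apply Rle_trans with (exp (- g) * exp e); [rewrite <- exp_plus; now apply exp_le_mono|].
  pose proof (exp_le_one_plus_twice e He).
  assert (exp (- g) <= 1) by (rewrite <- exp_0; apply exp_le_mono; lra).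
  pose proof (exp_pos (- g)); nra.
Qed.

Lemma sqrt_mult_le_amgm (X Y t : R) :
  0 <= X -> 0 <= Y -> 0 < t -> sqrt (X * Y) <= (t * X + Y / t) / 2.
Proof.
  intros HX HY Ht; rewrite sqrt_mult by lra.
  pose proof (sqrt_sqrt X HX); pose proof (sqrt_sqrt Y HY).
  pose proof (pow2_ge_0 (t * sqrt X - sqrt Y)).
  apply Rmult_le_reg_l with (2 * t); [lra|].
  replace (2 * t * ((t * X + Y / t) / 2)) with (t * t * X + Y) by (field; lra).
  nra.
Qed.

Lemma sum_sqrt_mult_le_twisted (f g : nat -> R) (r : R) (i n : nat) :
  0 < r -> (forall j, 0 <= f j) -> (forall j, 0 <= g j) ->
  sum_f_R0 (fun j => sqrt (f j * g j)) n <=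
  (sum_f_R0 (fun j => r ^ j / r ^ i * f j) n + sum_f_R0 (fun j => r ^ i / r ^ j * g j) n) / 2.
Proof.
  intros Hr Hf Hg; rewrite <- plus_sum.
  replace (sum_f_R0 _ n / 2) with (/ 2 * sum_f_R0 (fun j =>
      r ^ j / r ^ i * f j + r ^ i / r ^ j * g j) n) by (unfold Rdiv; ring).
  rewrite <- sum_f_R0_scal_l.
  apply sum_Rle; intros j _.
  assert (0 < r ^ i) by (now apply pow_lt); assert (0 < r ^ j) by (now apply pow_lt).
  eapply Rle_trans; [apply (sqrt_mult_le_amgm _ _ (r ^ j / r ^ i)); auto; now apply Rdiv_lt_0_compat|].
  right; field; lra.
Qed.

Lemma Z_eqb_sub_of_nat (a b c d : nat) :
  Z.eqb (Z.of_nat a - Z.of_nat b) (Z.of_nat c - Z.of_nat d) = true <-> (a + d = c + b)%nat.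
Proof. rewrite Z.eqb_eq; lia. Qed.

Lemma pow_ratio_shift (r : R) (i j l m : nat) :
  r <> 0 -> (l + i = j + m)%nat -> r ^ j / r ^ i = r ^ l / r ^ m.
Proof.
  intros Hr Hsum.
  assert (Hprod : r ^ j * r ^ m = r ^ i * r ^ l) by (rewrite <- !pow_add; f_equal; lia).
  pose proof (pow_nonzero r i Hr); pose proof (pow_nonzero r m Hr).
  field_simplify_eq; auto.
Qed.

Lemma Pmut_weight_nonneg (v w : R) (n k l m : nat) :
  0 < v < 1 -> 0 < w < 1 ->
  0 <= C n l * C k m * (v / (1 - v)) ^ l * (w / (1 - w)) ^ m.
Proof.
  intros Hv Hw.
  pose proof (C_nonneg n l); pose proof (C_nonneg k m).
  assert (0 <= (v / (1 - v)) ^ l) by (apply pow_le, Rdiv_le_0_compat; lra).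
  assert (0 <= (w / (1 - w)) ^ m) by (apply pow_le, Rdiv_le_0_compat; lra).
  apply Rmult_le_pos; [apply Rmult_le_pos; [apply Rmult_le_pos|]|]; assumption.
Qed.

Lemma Pmut_nonneg (N : nat) (v w : R) (i j : nat) :
  0 < v < 1 -> 0 < w < 1 -> 0 <= Pmut N v w i j.
Proof.
  intros Hv Hw; unfold Pmut; apply Rmult_le_pos.
  - apply Rmult_le_pos; apply pow_le; lra.
  - apply cond_pos_sum; intros l; apply cond_pos_sum; intros m.
    destruct (Z.eqb _ _); [now apply Pmut_weight_nonneg | lra].
Qed.

Lemma Pmut_scal_expand (t : R) (N : nat) (v w : R) (i j : nat) :
  t * Pmut N v w i j =
  sum_f_R0 (fun l => sum_f_R0 (fun m =>
    t * ((1 - v) ^ (N - i) * (1 - w) ^ i *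
      if Z.eqb (Z.of_nat l - Z.of_nat m) (Z.of_nat j - Z.of_nat i)
      then C (N - i) l * C i m * (v / (1 - v)) ^ l * (w / (1 - w)) ^ m
      else 0)) i) (N - i).
Proof.
  unfold Pmut; rewrite <- (Rmult_assoc t), scal_sum; apply sum_eq; intros l _.
  rewrite Rmult_comm, scal_sum; apply sum_eq; intros m _; ring.
Qed.

Lemma Pmut_twisted_forward_le (N : nat) (v w r : R) (i : nat) :
  0 < v < 1 -> 0 < w < 1 -> 0 < r -> (i <= N)%nat ->
  sum_f_R0 (fun j => r ^ j / r ^ i * Pmut N v w i j) N <=
  (1 - v + v * r) ^ (N - i) * (1 - w + w / r) ^ i.
Proof.
  intros Hv Hw Hr HiN.
  rewrite (sum_eq _ _ _ (fun j _ => Pmut_scal_expand (r ^ j / r ^ i) N v w i j)).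
  eapply Rle_trans.
  { apply (triple_sum_collapse_le
      (fun j l m => Z.eqb (Z.of_nat l - Z.of_nat m) (Z.of_nat j - Z.of_nat i)) _
      (fun l m => ((1 - v) ^ (N - i) * (C (N - i) l * (v * r / (1 - v)) ^ l)) *
                  ((1 - w) ^ i * (C i m * (w / r / (1 - w)) ^ m)))
      (fun _ => N - i)%nat (fun _ => i) N (N - i)%nat i).
    - intros l m.
      assert (0 <= v * r / (1 - v)) by (apply Rdiv_le_0_compat; nra).
      assert (0 <= w / r / (1 - w)) by (apply Rdiv_le_0_compat; [apply Rdiv_le_0_compat|]; lra).
      apply Rmult_le_pos; apply Rmult_le_pos; try (apply pow_le; lra);
        apply Rmult_le_pos; try apply C_nonneg; now apply pow_le.
    - intros l m j1 j2 E1 E2.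
      apply Z_eqb_sub_of_nat in E1; apply Z_eqb_sub_of_nat in E2; lia.
    - intros; lia.
    - intros j l m _ _ _; destruct (Z.eqb _ _) eqn:E; [|lra].
      apply Z_eqb_sub_of_nat in E.
      rewrite (pow_ratio_shift r i j l m) by (lra || lia).
      right; unfold Rdiv; rewrite !Rpow_mult_distr, !pow_inv.
      field; repeat split; apply pow_nonzero; lra. }
  rewrite sum_f_R0_mult_sums, !sum_f_R0_scal_l, !sum_C_pow, <- !Rpow_mult_distr.
  right; f_equal; f_equal; field; lra.
Qed.

Lemma Pmut_row_sum_le_1 (N : nat) (v w : R) (i : nat) :
  0 < v < 1 -> 0 < w < 1 -> (i <= N)%nat -> sum_f_R0 (fun j => Pmut N v w i j) N <= 1.
Proof.
  intros Hv Hw HiN.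
  pose proof (Pmut_twisted_forward_le N v w 1 i Hv Hw Rlt_0_1 HiN) as Hsum.
  replace (1 - v + v * 1) with 1 in Hsum by ring.
  replace (1 - w + w / 1) with 1 in Hsum by field.
  rewrite !pow1, Rmult_1_l in Hsum.
  erewrite sum_eq; [exact Hsum|]; intros j _; simpl; rewrite !pow1; field.
Qed.

Lemma Pmut_le_1 (N : nat) (v w : R) (i j : nat) :
  0 < v < 1 -> 0 < w < 1 -> (i <= N)%nat -> (j <= N)%nat -> Pmut N v w i j <= 1.
Proof.
  intros Hv Hw HiN HjN.
  eapply Rle_trans; [|apply (Pmut_row_sum_le_1 N v w i); assumption].
  apply (sum_f_R0_term_le (fun j => Pmut N v w i j)); [exact HjN|].
  intros; now apply Pmut_nonneg.
Qed.

(* r^(i-j) times the term of P_ji with l flips 0->1 and m flips 1->0, where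
   N - j = A + l, j = B + m, N - i = A + m and i = B + l. *)
Lemma twisted_backward_term_le (v w r : R) (A B l m : nat) :
  0 < v < 1 -> 0 < w < 1 -> 0 < r ->
  r ^ (B + l) / r ^ (B + m) * ((1 - v) ^ (A + l) * (1 - w) ^ (B + m) *
    (C (A + l) l * C (B + m) m * (v / (1 - v)) ^ l * (w / (1 - w)) ^ m)) <=
  ((1 - v) ^ (A + m) * (C (A + m + l) l * (v * r / (1 - w)) ^ l)) *
  ((1 - w) ^ (B + l) * (C (B + l + m) m * (w / r / (1 - v)) ^ m)).
Proof.
  intros Hv Hw Hr.
  set (K := (1 - v) ^ (A + m) * (1 - w) ^ (B + l) * (v * r / (1 - w)) ^ l * (w / r / (1 - v)) ^ m).
  assert (HK : 0 <= K).
  { assert (0 <= v * r / (1 - w)) by (apply Rdiv_le_0_compat; nra).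
    assert (0 <= w / r / (1 - v)) by (apply Rdiv_le_0_compat; [apply Rdiv_le_0_compat|]; lra).
    unfold K; repeat apply Rmult_le_pos; apply pow_le; lra. }
  replace (r ^ (B + l) / r ^ (B + m) * _) with (C (A + l) l * C (B + m) m * K).
  2:{ unfold K, Rdiv; rewrite !pow_add, !Rpow_mult_distr, !pow_inv.
      field; repeat split; apply pow_nonzero; lra. }
  replace (_ * _ * (_ * _)) with (C (A + m + l) l * C (B + l + m) m * K) by (unfold K; ring).
  apply Rmult_le_compat_r; [exact HK|].
  apply Rmult_le_compat; try apply C_nonneg.
  - replace (A + m + l)%nat with (A + l + m)%nat by lia; apply C_le_add; lia.
  - replace (B + l + m)%nat with (B + m + l)%nat by lia; apply C_le_add; lia.
Qed.

Lemma Pmut_twisted_backward_le (N : nat) (v w r : R) (i : nat) :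
  0 < v < 1 -> 0 < w < 1 -> 0 < r -> (i <= N)%nat ->
  sum_f_R0 (fun j => r ^ i / r ^ j * Pmut N v w j i) N <=
  (1 - v) ^ (N - i) * negbin_sum (v * r / (1 - w)) (N - i) N *
  ((1 - w) ^ i * negbin_sum (w / r / (1 - v)) i N).
Proof.
  intros Hv Hw Hr HiN.
  assert (Hp : 0 <= v * r / (1 - w)) by (apply Rdiv_le_0_compat; nra).
  assert (Hq : 0 <= w / r / (1 - v)) by (apply Rdiv_le_0_compat; [apply Rdiv_le_0_compat|]; lra).
  rewrite (sum_eq _ _ _ (fun j _ => Pmut_scal_expand (r ^ i / r ^ j) N v w j i)).
  unfold negbin_sum.
  rewrite <- (sum_f_R0_scal_l ((1 - v) ^ (N - i))), <- (sum_f_R0_scal_l ((1 - w) ^ i)).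
  rewrite <- sum_f_R0_mult_sums.
  apply (triple_sum_collapse_le
    (fun j l m => Z.eqb (Z.of_nat l - Z.of_nat m) (Z.of_nat i - Z.of_nat j))
    _ _ (fun j => N - j)%nat (fun j => j)).
  - intros l m; apply Rmult_le_pos; apply Rmult_le_pos; try (apply pow_le; lra);
      apply Rmult_le_pos; try apply C_nonneg; now apply pow_le.
  - intros l m j1 j2 E1 E2.
    apply Z_eqb_sub_of_nat in E1; apply Z_eqb_sub_of_nat in E2; lia.
  - intros; lia.
  - intros j l m Hj Hl Hm; destruct (Z.eqb _ _) eqn:E; [|lra].
    apply Z_eqb_sub_of_nat in E.
    pose proof (twisted_backward_term_le v w r (N - j - l) (j - m) l m Hv Hw Hr) as T.
    replace (N - j - l + l)%nat with (N - j)%nat in T by lia.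
    replace (j - m + m)%nat with j in T by lia.
    replace (j - m + l)%nat with i in T by lia.
    replace (N - j - l + m)%nat with (N - i)%nat in T by lia.
    exact T.
Qed.

Lemma negbin_sum_le_exp (p : R) (n L : nat) :
  0 <= p < 1 -> negbin_sum p n L <= exp (INR (S n) * (p / (1 - p))).
Proof.
  intros Hp; eapply Rle_trans; [now apply negbin_sum_le | now apply inv_pow_le_exp].
Qed.

Lemma Pmut_twisted_forward_le_exp (N : nat) (v w r : R) (i : nat) :
  0 < v < 1 -> 0 < w < 1 -> 0 < r -> (i <= N)%nat ->
  sum_f_R0 (fun j => r ^ j / r ^ i * Pmut N v w i j) N <=
  exp (INR (N - i) * (v * (r - 1)) + INR i * (w * (/ r - 1))).
Proof.
  intros Hv Hw Hr HiN.
  eapply Rle_trans; [now apply Pmut_twisted_forward_le|].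
  assert (0 < / r) by now apply Rinv_0_lt_compat.
  replace (1 - v + v * r) with (1 + v * (r - 1)) by ring.
  replace (1 - w + w / r) with (1 + w * (/ r - 1)) by (field; lra).
  rewrite exp_plus; apply Rmult_le_compat; try apply pow_le; try apply pow_le_exp; nra.
Qed.

Lemma Pmut_twisted_backward_le_exp (N : nat) (v w r : R) (i : nat) :
  0 < v < 1 -> 0 < w < 1 -> 0 < r -> (i <= N)%nat ->
  0 <= v * r / (1 - w) < 1 -> 0 <= w / r / (1 - v) < 1 ->
  sum_f_R0 (fun j => r ^ i / r ^ j * Pmut N v w j i) N <=
  exp (INR (N - i) * (- v) + INR i * (- w)
       + INR (S (N - i)) * (v * r / (1 - w) / (1 - v * r / (1 - w)))
       + INR (S i) * (w / r / (1 - v) / (1 - w / r / (1 - v)))).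
Proof.
  intros Hv Hw Hr HiN Hp Hq.
  eapply Rle_trans; [now apply Pmut_twisted_backward_le|].
  replace (INR (N - i) * (- v) + _ + _ + _) with
    ((INR (N - i) * (- v) + INR (S (N - i)) * (v * r / (1 - w) / (1 - v * r / (1 - w))))
     + (INR i * (- w) + INR (S i) * (w / r / (1 - v) / (1 - w / r / (1 - v))))) by ring.
  rewrite !exp_plus.
  replace (1 - v) with (1 + - v) at 1 by ring; replace (1 - w) with (1 + - w) at 2 by ring.
  apply Rmult_le_compat; try (apply Rmult_le_pos; [apply pow_le; lra | now apply negbin_sum_nonneg]);
    apply Rmult_le_compat; try (apply pow_le; lra); try (now apply negbin_sum_nonneg);
    try (apply pow_le_exp; lra); now apply negbin_sum_le_exp.
Qed.

(* The optimal twist b/a, shifted by s so that it and its inverse stay O(1/s). *)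
Definition tilt (a b s : R) : R := (b + s) / (a + s).

Lemma tilt_pos (a b s : R) : 0 <= a -> 0 <= b -> 0 < s -> 0 < tilt a b s.
Proof. intros; apply Rdiv_lt_0_compat; lra. Qed.

Lemma tilt_inv (a b s : R) : 0 <= a -> 0 <= b -> 0 < s -> / tilt a b s = tilt b a s.
Proof. intros; unfold tilt; field; lra. Qed.

Lemma sq_mul_tilt_le (a b s : R) :
  0 <= a -> 0 <= b -> 0 < s -> a ^ 2 * tilt a b s <= a * (b + s).
Proof.
  intros Ha Hb Hs; unfold tilt.
  replace (a ^ 2 * ((b + s) / (a + s))) with (a * (b + s) * (a / (a + s))) by (field; lra).
  rewrite <- (Rmult_1_r (a * (b + s))) at 2.
  apply Rmult_le_compat_l; [nra|].
  apply Rmult_le_reg_r with (a + s); [lra|]; unfold Rdiv.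
  rewrite Rmult_assoc, Rinv_l by lra; lra.
Qed.

Lemma tilt_le (a b s : R) : 0 <= a -> 0 <= b -> 0 < s -> tilt a b s <= (b + s) / s.
Proof.
  intros; unfold tilt, Rdiv; apply Rmult_le_compat_l; [lra|].
  apply Rinv_le_contravar; lra.
Qed.

Lemma tilt_exponent_le (a b s : R) :
  0 <= a -> 0 <= b -> 0 < s ->
  a ^ 2 * (tilt a b s - 1) + b ^ 2 * (/ tilt a b s - 1) <= - (a - b) ^ 2 + s * (a + b).
Proof.
  intros Ha Hb Hs; rewrite tilt_inv by assumption.
  pose proof (sq_mul_tilt_le a b s Ha Hb Hs); pose proof (sq_mul_tilt_le b a s Hb Ha Hs).
  nra.
Qed.

Lemma succ_mul_odds_le (n p w A : R) :
  0 <= p <= 1/2 -> 0 <= w <= 1/2 -> 0 <= n -> n * p * (1 - w) <= A ->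
  (n + 1) * (p / (1 - p)) <= n * p * (1 - w) + 2 * (w + p) * (1 + 2 * A).
Proof.
  intros Hp Hw Hn HA.
  set (X := n * p * (1 - w)) in *.
  assert (HX : 0 <= X) by (unfold X; repeat apply Rmult_le_pos; lra).
  assert (Hodds : p / (1 - p) <= p * (1 + 2 * p)).
  { unfold Rdiv; rewrite Rmult_comm.
    pose proof (inv_one_minus_le p Hp); nra. }
  assert (Hnp : n * p <= X * (1 + 2 * w)).
  { unfold X; assert (0 <= n * p) by nra.
    assert (0 <= n * p * (w * (1 - 2 * w))) by (apply Rmult_le_pos; nra). nra. }
  assert (Hsum : (n + 1) * (p / (1 - p)) <= (X * (1 + 2 * w) + p) * (1 + 2 * p)).
  { apply Rle_trans with ((n + 1) * (p * (1 + 2 * p))); [apply Rmult_le_compat_l; lra|].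
    nra. }
  assert (w * X <= w * A) by (apply Rmult_le_compat_l; lra).
  assert (p * (X * (1 + 2 * w)) <= p * (A * 2)) by (apply Rmult_le_compat_l; nra).
  nra.
Qed.

Lemma tilt_odds_le (c s a b v w : R) :
  1 <= c -> 0 < s <= 1 -> 0 <= a -> 0 <= b <= c -> 0 < v <= c ^ 2 * s ^ 2 -> 0 <= w <= 1/2 ->
  0 <= v * tilt a b s / (1 - w) <= 4 * c ^ 3 * s.
Proof.
  intros Hc Hs Ha Hb Hv Hw.
  pose proof (tilt_pos a b s Ha (proj1 Hb) (proj1 Hs)) as Hr.
  pose proof (tilt_le a b s Ha (proj1 Hb) (proj1 Hs)) as Hr'.
  assert (Hvr : v * tilt a b s <= 2 * c ^ 3 * s).
  { apply Rle_trans with (c ^ 2 * s ^ 2 * ((b + s) / s)); [apply Rmult_le_compat; lra|].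
    replace (c ^ 2 * s ^ 2 * ((b + s) / s)) with (c ^ 2 * s * (b + s)) by (field; lra).
    assert (0 <= c ^ 2 * s) by (apply Rmult_le_pos; [apply pow_le|]; lra).
    replace (2 * c ^ 3 * s) with (c ^ 2 * s * (2 * c)) by ring.
    apply Rmult_le_compat_l; lra. }
  split; [apply Rdiv_le_0_compat; nra|].
  apply Rmult_le_reg_r with (1 - w); [lra|].
  unfold Rdiv; rewrite Rmult_assoc, Rinv_l, Rmult_1_r by lra.
  assert (0 <= c ^ 3 * s) by (apply Rmult_le_pos; [apply pow_le|]; lra).
  nra.
Qed.

(* Applied with s = 1/sqrt N, v = mu s^2, w = nu s^2, a = sqrt (mu (1 - i/N)),
   b = sqrt (nu i/N) and c = 1 + sqrt mu + sqrt nu. *)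
Section TiltedBound.

Variables (N i : nat) (c s a b v w : R).
Hypotheses (HiN : (i <= N)%nat) (Hc : 1 <= c) (Hs : 0 < s) (Hsmall : 204 * c ^ 5 * s <= 1)
  (Ha : 0 <= a <= c) (Hb : 0 <= b <= c)
  (Hv : 0 < v <= c ^ 2 * s ^ 2) (Hw : 0 < w <= c ^ 2 * s ^ 2)
  (Ha2 : a ^ 2 = INR (N - i) * v) (Hb2 : b ^ 2 = INR i * w).

Lemma tilted_scale_bounds : s <= 1 /\ c ^ 2 * s ^ 2 <= c ^ 3 * s /\ 204 * c ^ 3 * s <= 1.
Proof.
  assert (Hc3 : 1 <= c ^ 3) by (apply pow_R1_Rle; lra).
  assert (Hc53 : c ^ 3 <= c ^ 5) by (apply Rle_pow; [lra | lia]).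
  assert (204 * c ^ 3 * s <= 1) by nra.
  split; [nra | split; [|assumption]].
  replace (c ^ 3 * s) with (c ^ 2 * s * c) by ring.
  replace (c ^ 2 * s ^ 2) with (c ^ 2 * s * s) by ring.
  apply Rmult_le_compat_l; [apply Rmult_le_pos; [apply pow_le|]|]; nra.
Qed.

Lemma tilted_scale_error_le : s * (a + b) <= 2 * c ^ 5 * s.
Proof.
  assert (c <= c ^ 5) by (rewrite <- (pow_1 c) at 1; apply Rle_pow; [lra | lia]).
  nra.
Qed.

Lemma tilted_forward_exponent_le :
  INR (N - i) * (v * (tilt a b s - 1)) + INR i * (w * (/ tilt a b s - 1)) <=
  - (a - b) ^ 2 + 102 * c ^ 5 * s.
Proof.
  replace (INR (N - i) * _ + _) with (a ^ 2 * (tilt a b s - 1) + b ^ 2 * (/ tilt a b s - 1))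
    by (rewrite Ha2, Hb2; ring).
  pose proof (tilt_exponent_le a b s (proj1 Ha) (proj1 Hb) Hs).
  pose proof tilted_scale_error_le.
  assert (0 <= c ^ 5 * s) by (apply Rmult_le_pos; [apply pow_le|]; lra).
  lra.
Qed.

Lemma tilted_odds_le :
  0 <= v * tilt a b s / (1 - w) <= 4 * c ^ 3 * s /\
  0 <= w / tilt a b s / (1 - v) <= 4 * c ^ 3 * s.
Proof.
  destruct tilted_scale_bounds as (Hs1 & Hcs & Hc3).
  replace (w / tilt a b s) with (w * tilt b a s)
    by (unfold Rdiv; rewrite tilt_inv; tauto).
  split; [apply (tilt_odds_le c s a b v w) | apply (tilt_odds_le c s b a w v)]; try tauto; nra.
Qed.

Lemma tilted_odds_error_le :
  2 * (w + v * tilt a b s / (1 - w)) * (1 + 2 * (2 * c ^ 2)) +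
  2 * (v + w / tilt a b s / (1 - v)) * (1 + 2 * (2 * c ^ 2)) <= 100 * c ^ 5 * s.
Proof.
  destruct tilted_scale_bounds as (Hs1 & Hcs & Hc3).
  destruct tilted_odds_le as [Hp Hq].
  assert (Hc2 : 1 + 2 * (2 * c ^ 2) <= 5 * c ^ 2) by nra.
  assert (0 <= c ^ 3 * s) by (apply Rmult_le_pos; [apply pow_le|]; lra).
  replace (100 * c ^ 5 * s) with (2 * (10 * (c ^ 3 * s)) * (5 * c ^ 2)) by ring.
  rewrite <- Rmult_plus_distr_r, <- Rmult_plus_distr_l.
  apply Rmult_le_compat; nra.
Qed.

Lemma tilted_mass_le : a ^ 2 * tilt a b s <= 2 * c ^ 2 /\ b ^ 2 / tilt a b s <= 2 * c ^ 2.
Proof.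
  destruct tilted_scale_bounds as (Hs1 & _ & _).
  unfold Rdiv; rewrite tilt_inv by tauto.
  pose proof (sq_mul_tilt_le a b s (proj1 Ha) (proj1 Hb) Hs).
  pose proof (sq_mul_tilt_le b a s (proj1 Hb) (proj1 Ha) Hs).
  split; nra.
Qed.

Lemma tilted_backward_exponent_le :
  INR (N - i) * (- v) + INR i * (- w)
  + INR (S (N - i)) * (v * tilt a b s / (1 - w) / (1 - v * tilt a b s / (1 - w)))
  + INR (S i) * (w / tilt a b s / (1 - v) / (1 - w / tilt a b s / (1 - v)))
  <= - (a - b) ^ 2 + 102 * c ^ 5 * s.
Proof.
  destruct tilted_scale_bounds as (Hs1 & Hcs & Hc3).
  destruct tilted_odds_le as [Hp Hq]; destruct tilted_mass_le as [Hma Hmb].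
  assert (Hv2 : v <= 1/2) by nra; assert (Hw2 : w <= 1/2) by nra.
  pose proof (tilt_pos a b s (proj1 Ha) (proj1 Hb) Hs) as Hr.
  assert (Ep : INR (N - i) * (v * tilt a b s / (1 - w)) * (1 - w) = a ^ 2 * tilt a b s)
    by (rewrite Ha2; field; lra).
  assert (Eq : INR i * (w / tilt a b s / (1 - v)) * (1 - v) = b ^ 2 / tilt a b s)
    by (rewrite Hb2; field; lra).
  pose proof (succ_mul_odds_le (INR (N - i)) (v * tilt a b s / (1 - w)) w (2 * c ^ 2)
                ltac:(lra) ltac:(lra)
                (pos_INR _) ltac:(rewrite Ep; exact Hma)) as Gp.
  pose proof (succ_mul_odds_le (INR i) (w / tilt a b s / (1 - v)) v (2 * c ^ 2)
                ltac:(lra) ltac:(lra)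
                (pos_INR _) ltac:(rewrite Eq; exact Hmb)) as Gq.
  rewrite Ep in Gp; rewrite Eq in Gq.
  pose proof (tilt_exponent_le a b s (proj1 Ha) (proj1 Hb) Hs).
  pose proof tilted_scale_error_le; pose proof tilted_odds_error_le.
  rewrite !S_INR; unfold Rdiv in *; lra.
Qed.

Lemma sum_sqrt_Pmut_le_tilted :
  sum_f_R0 (fun j => sqrt (Pmut N v w i j * Pmut N v w j i)) N <=
  exp (- (a - b) ^ 2) + 204 * c ^ 5 * s.
Proof.
  destruct tilted_scale_bounds as (Hs1 & Hcs & Hc3).
  destruct tilted_odds_le as [Hp Hq].
  assert (Hv1 : 0 < v < 1) by nra; assert (Hw1 : 0 < w < 1) by nra.
  pose proof (tilt_pos a b s (proj1 Ha) (proj1 Hb) Hs) as Hr.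
  eapply Rle_trans.
  { apply (sum_sqrt_mult_le_twisted _ _ (tilt a b s) i N Hr); intros; now apply Pmut_nonneg. }
  pose proof (Pmut_twisted_forward_le_exp N v w (tilt a b s) i Hv1 Hw1 Hr HiN).
  pose proof (Pmut_twisted_backward_le_exp N v w (tilt a b s) i Hv1 Hw1 Hr HiN
                ltac:(nra) ltac:(nra)).
  assert (Hg : 0 <= (a - b) ^ 2) by apply pow2_ge_0.
  assert (He : 0 <= 102 * c ^ 5 * s <= 1/2)
    by (split; [apply Rmult_le_pos; [apply Rmult_le_pos; [|apply pow_le]|]|]; lra).
  pose proof (exp_perturb_le _ _ _ Hg He tilted_forward_exponent_le).
  pose proof (exp_perturb_le _ _ _ Hg He tilted_backward_exponent_le).
  lra.
Qed.

End TiltedBound.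

Lemma sum_sqrt_Pmut_le_card (N : nat) (v w : R) (i : nat) :
  0 < v < 1 -> 0 < w < 1 -> (i <= N)%nat ->
  sum_f_R0 (fun j => sqrt (Pmut N v w i j * Pmut N v w j i)) N <= INR N + 1.
Proof.
  intros Hv Hw HiN.
  apply Rle_trans with (sum_f_R0 (fun _ => 1) N); [|rewrite sum_cte, S_INR; lra].
  apply sum_Rle; intros j Hj; rewrite <- sqrt_1; apply sqrt_le_1_alt.
  pose proof (Pmut_le_1 N v w i j Hv Hw HiN Hj); pose proof (Pmut_le_1 N v w j i Hv Hw Hj HiN).
  pose proof (Pmut_nonneg N v w i j Hv Hw); pose proof (Pmut_nonneg N v w j i Hv Hw).
  nra.
Qed.

Lemma sum_sqrt_Pmut_le_large (mu nu : R) (N i : nat) :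
  0 < mu -> 0 < nu -> 0 < INR N -> (i <= N)%nat ->
  204 * (1 + sqrt mu + sqrt nu) ^ 5 / sqrt (INR N) <= 1 ->
  sum_f_R0 (fun j =>
      sqrt (Pmut N (mu / INR N) (nu / INR N) i j * Pmut N (mu / INR N) (nu / INR N) j i)) N
  <= exp (- gfun mu nu (INR i / INR N)) + 204 * (1 + sqrt mu + sqrt nu) ^ 5 / sqrt (INR N).
Proof.
  intros Hmu Hnu HN HiN Hsmall.
  set (c := 1 + sqrt mu + sqrt nu) in *; set (z := INR i / INR N).
  assert (Hsq : 0 < sqrt (INR N)) by now apply sqrt_lt_R0.
  assert (Hss : (/ sqrt (INR N)) ^ 2 = / INR N) by (rewrite pow_inv, pow2_sqrt; lra).
  assert (Hz : 0 <= z <= 1).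
  { pose proof (pos_INR i); pose proof (le_INR _ _ HiN).
    unfold z; split; [apply Rdiv_le_0_compat; lra|].
    apply Rmult_le_reg_r with (INR N); [lra|]; unfold Rdiv; rewrite Rmult_assoc, Rinv_l; lra. }
  pose proof (sqrt_pos mu); pose proof (sqrt_pos nu).
  assert (Hscaled : forall x y, 0 < x -> 0 <= y <= 1 -> sqrt x <= c ->
            0 <= sqrt (x * y) <= c /\ 0 < x / INR N <= c ^ 2 * (/ sqrt (INR N)) ^ 2).
  { intros x y Hx Hy Hxc; split.
    - split; [apply sqrt_pos|]; apply Rle_trans with (sqrt x); [apply sqrt_le_1_alt; nra | lra].
    - rewrite Hss; split; [now apply Rdiv_lt_0_compat|].
      pose proof (pow2_sqrt x (Rlt_le _ _ Hx)); pose proof (sqrt_pos x).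
      apply Rmult_le_compat_r; [apply Rlt_le, Rinv_0_lt_compat; lra | nra]. }
  destruct (Hscaled mu (1 - z) Hmu ltac:(lra) ltac:(unfold c; lra)) as [Ha Hv].
  destruct (Hscaled nu z Hnu Hz ltac:(unfold c; lra)) as [Hb Hw].
  apply (sum_sqrt_Pmut_le_tilted N i c (/ sqrt (INR N))); try assumption.
  - unfold c; lra.
  - now apply Rinv_0_lt_compat.
  - rewrite pow2_sqrt, minus_INR by (lia || nra); unfold z; field; lra.
  - rewrite pow2_sqrt by nra; unfold z; field; lra.
Qed.

Lemma sum_sqrt_Pmut_le_small (mu nu M : R) (N i : nat) :
  0 < mu -> 0 < nu -> mu < INR N -> nu < INR N -> (i <= N)%nat -> 1 < M / sqrt (INR N) ->
  sum_f_R0 (fun j =>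
      sqrt (Pmut N (mu / INR N) (nu / INR N) i j * Pmut N (mu / INR N) (nu / INR N) j i)) N
  <= 2 * M ^ 3 / sqrt (INR N).
Proof.
  intros Hmu Hnu HmuN HnuN HiN Hsmall.
  assert (Hfrac : forall x, 0 < x < INR N -> 0 < x / INR N < 1).
  { intros x Hx; split; [apply Rdiv_lt_0_compat; lra|].
    apply Rmult_lt_reg_r with (INR N); [lra|].
    unfold Rdiv; rewrite Rmult_assoc, Rinv_l; lra. }
  eapply Rle_trans; [apply sum_sqrt_Pmut_le_card; try apply Hfrac; (assumption || lra)|].
  assert (HN : 1 <= INR N).
  { destruct N as [|N]; [simpl in HmuN; lra|]. rewrite S_INR; pose proof (pos_INR N); lra. }
  assert (Ht : 1 <= sqrt (INR N)) by (rewrite <- sqrt_1; now apply sqrt_le_1_alt).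
  set (t := sqrt (INR N)) in *.
  assert (Hcard : INR N = t ^ 2) by (unfold t; rewrite pow2_sqrt; lra).
  assert (HtM : t < M) by (apply Rmult_lt_reg_r with (/ t); [apply Rinv_0_lt_compat; lra|];
                           rewrite Rinv_r by lra; exact Hsmall).
  assert (Hcube : t ^ 3 <= M ^ 3) by (apply pow_incr; lra).
  apply Rmult_le_reg_r with t; [lra|].
  unfold Rdiv; rewrite Rmult_assoc, Rinv_l by lra; nra.
Qed.

Theorem proposition5 (mu nu : R) (hmu : 0 < mu) (hnu : 0 < nu) :
  exists C : R,
    forall N : nat, mu < INR N -> nu < INR N ->
    forall i : nat, (i <= N)%nat ->
      sum_f_R0 (fun j =>
          sqrt (Pmut N (mu / INR N) (nu / INR N) i j *
                Pmut N (mu / INR N) (nu / INR N) j i)) N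
      <= exp (- gfun mu nu (INR i / INR N)) + C / sqrt (INR N).
Proof.
  set (M := 204 * (1 + sqrt mu + sqrt nu) ^ 5).
  assert (HM : 0 < M).
  { pose proof (sqrt_pos mu); pose proof (sqrt_pos nu).
    unfold M; apply Rmult_lt_0_compat, pow_lt; lra. }
  exists (M + 2 * M ^ 3); intros N HmuN HnuN i HiN.
  assert (Hsq : 0 < sqrt (INR N)) by (apply sqrt_lt_R0; lra).
  assert (0 < M / sqrt (INR N)) by now apply Rdiv_lt_0_compat.
  assert (0 < 2 * M ^ 3 / sqrt (INR N)) by (apply Rdiv_lt_0_compat; [apply Rmult_lt_0_compat, pow_lt|]; lra).
  pose proof (exp_pos (- gfun mu nu (INR i / INR N))).
  replace ((M + 2 * M ^ 3) / sqrt (INR N)) with (M / sqrt (INR N) + 2 * M ^ 3 / sqrt (INR N))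
    by (field; lra).
  destruct (Rle_lt_dec (M / sqrt (INR N)) 1) as [Hlarge | Hsmall].
  - pose proof (sum_sqrt_Pmut_le_large mu nu N i hmu hnu ltac:(lra) HiN Hlarge) as Hbound.
    fold M in Hbound; lra.
  - pose proof (sum_sqrt_Pmut_le_small mu nu M N i hmu hnu HmuN HnuN HiN Hsmall); lra.
Qed.
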